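(* The logic $\mathsf{ICK}\oplus((p\to q)\to(p\mathrel{\Box\!\!\!\rightarrow} q))$ is sound and complete with respect to the class of conditional frames $(X,\leq,\mathcal{R})$ satisfying $R_a[x]\subseteq{\uparrow}x\cap a$ for all $x\in X$ and all upsets $a$.
   Context: Formulas: $\phi ::= p\mid\bot\mid\phi\wedge\phi\mid\phi\vee\phi\mid\phi\to\phi\mid\phi\mathrel{\Box\!\!\!\rightarrow}\phi$. $\mathsf{ICK}\oplus\Gamma$ is the smallest set containing intuitionistic propositional logic, $\Gamma$, $(p\mathrel{\Box\!\!\!\rightarrow}(q\wedge r))\leftrightarrow((p\mathrel{\Box\!\!\!\rightarrow} q)\wedge(p\mathrel{\Box\!\!\!\rightarrow} r))$ and $(p\mathrel{\Box\!\!\!\rightarrow}\top)\leftrightarrow\top$, closed under uniform substitution, modus ponens and congruence rules for both arguments of $\mathrel{\Box\!\!\!\rightarrow}$. A conditional frame is $(X,\leq,\mathcal{R})$, $(X,\leq)$ a nonempty preorder, $\mathcal{R}=\{R_a\mid a\text{ an upset}\}$ with $(\leq\circ R_a)\subseteq(R_a\circ\leq)$; valuations assign upsets to letters and $x\models\phi\mathrel{\Box\!\!\!\rightarrow}\psi$ iff every $y$ with $xR_{V(\phi)}y$ satisfies $\psi$. ${\uparrow}x=\{y\mid x\leq y\}$. *)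

Inductive form : Type :=
  | Var : nat -> form
  | Bot : form
  | And : form -> form -> form
  | Or  : form -> form -> form
  | Imp : form -> form -> form
  | Cond : form -> form -> form.

Definition Top : form := Imp Bot Bot.
Definition Iff (a b : form) : form := And (Imp a b) (Imp b a).

Fixpoint subst (s : nat -> form) (f : form) : form :=
  match f with
  | Var n => s n
  | Bot => Bot
  | And a b => And (subst s a) (subst s b)
  | Or a b => Or (subst s a) (subst s b)
  | Imp a b => Imp (subst s a) (subst s b)
  | Cond a b => Cond (subst s a) (subst s b)
  end.

Inductive ICK (Gamma : form -> Prop) : form -> Prop :=
  | ax_K : forall a b, ICK Gamma (Imp a (Imp b a))
  | ax_S : forall a b c,
      ICK Gamma (Imp (Imp a (Imp b c)) (Imp (Imp a b) (Imp a c)))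
  | ax_andI : forall a b, ICK Gamma (Imp a (Imp b (And a b)))
  | ax_andE1 : forall a b, ICK Gamma (Imp (And a b) a)
  | ax_andE2 : forall a b, ICK Gamma (Imp (And a b) b)
  | ax_orI1 : forall a b, ICK Gamma (Imp a (Or a b))
  | ax_orI2 : forall a b, ICK Gamma (Imp b (Or a b))
  | ax_orE : forall a b c,
      ICK Gamma (Imp (Imp a c) (Imp (Imp b c) (Imp (Or a b) c)))
  | ax_botE : forall a, ICK Gamma (Imp Bot a)
  | ax_Gamma : forall a, Gamma a -> ICK Gamma a
  | ax_CondAnd :
      ICK Gamma (Iff (Cond (Var 0) (And (Var 1) (Var 2)))
                     (And (Cond (Var 0) (Var 1)) (Cond (Var 0) (Var 2))))
  | ax_CondTop : ICK Gamma (Iff (Cond (Var 0) Top) Top)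
  | r_subst : forall s a, ICK Gamma a -> ICK Gamma (subst s a)
  | r_MP : forall a b, ICK Gamma (Imp a b) -> ICK Gamma a -> ICK Gamma b
  | r_congL : forall a b c, ICK Gamma (Iff a b) ->
      ICK Gamma (Iff (Cond a c) (Cond b c))
  | r_congR : forall a b c, ICK Gamma (Iff a b) ->
      ICK Gamma (Iff (Cond c a) (Cond c b)).

Definition ax_ImpCond : form := Imp (Imp (Var 0) (Var 1)) (Cond (Var 0) (Var 1)).

Record cframe : Type := {
  cw :> Type;
  cle : cw -> cw -> Prop;
  (* R a, meant for upsets a (values on non-upsets are irrelevant) *)
  cR : (cw -> Prop) -> cw -> cw -> Prop
}.

Definition upset {X : Type} (le : X -> X -> Prop) (a : X -> Prop) : Prop :=
  forall x y, le x y -> a x -> a y.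

Definition is_cframe (F : cframe) : Prop :=
  inhabited (cw F) /\
  (forall x, cle F x x) /\
  (forall x y z, cle F x y -> cle F y z -> cle F x z) /\
  (forall a, upset (cle F) a ->
     forall x y z, cle F x y -> cR F a y z ->
       exists w, cR F a x w /\ cle F w z).

Definition valuation (F : cframe) : Type := nat -> cw F -> Prop.

Definition valid_val (F : cframe) (V : valuation F) : Prop :=
  forall n, upset (cle F) (V n).

Fixpoint sat (F : cframe) (V : valuation F) (x : cw F) (f : form) : Prop :=
  match f with
  | Var n => V n x
  | Bot => False
  | And a b => sat F V x a /\ sat F V x b
  | Or a b => sat F V x a \/ sat F V x b
  | Imp a b => forall y, cle F x y -> sat F V y a -> sat F V y b
  | Cond a b => forall y, cR F (fun z => sat F V z a) x y -> sat F V y b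
  end.

Definition frame_valid (F : cframe) (f : form) : Prop :=
  forall V : valuation F, valid_val F V -> forall x : cw F, sat F V x f.

Definition reflexive_cond (F : cframe) : Prop :=
  forall a, upset (cle F) a -> forall x y, cR F a x y -> cle F x y /\ a y.

(* Soundness: if y >= x forces p -> q and y R_a z with a the truth set of p, the frame
   condition gives y <= z and p at z, hence q at z.
   Completeness: in the canonical model of prime theories, x R_A y holds when A is the
   truth set of some phi, y extends x, and y contains phi and every chi with
   phi []-> chi in x; this frame satisfies the condition by construction. The axiom
   (p -> q) -> (p []-> q) makes {chi | phi []-> chi in x} contain x and phi, and
   (with the ICK axioms) closed under modus ponens, so if phi []-> psi is not in x,
   Lindenbaum's lemma yields a successor of x omitting psi. *)

From Stdlib Require Import Classical FunctionalExtensionality PropExtensionality Cantor Lia.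

Lemma pred_ext {X : Type} (P Q : X -> Prop) : (forall x, P x <-> Q x) -> P = Q.
Proof.
  intro H; apply functional_extensionality; intro x.
  apply propositional_extensionality, H.
Qed.

Section FrameSemantics.
Variable F : cframe.

Lemma sat_subst (V : valuation F) (s : nat -> form) (f : form) (x : F) :
  sat F V x (subst s f) <-> sat F (fun n z => sat F V z (s n)) x f.
Proof.
  revert x; induction f as [n| |a IHa b IHb|a IHa b IHb|a IHa b IHb|a IHa b IHb];
    intro x; simpl; try tauto.
  - rewrite IHa, IHb; tauto.
  - rewrite IHa, IHb; tauto.
  - split; intros H y Hxy Hy; apply IHb, H, IHa; assumption.
  - rewrite (pred_ext _ _ IHa).
    split; intros H y Hy; apply IHb, H, Hy.
Qed.

Hypothesis HF : is_cframe F.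

Lemma cle_refl (x : F) : cle F x x.
Proof. destruct HF as [_ [H _]]; apply H. Qed.

Lemma cle_trans (x y z : F) : cle F x y -> cle F y z -> cle F x z.
Proof. destruct HF as [_ [_ [H _]]]; apply H. Qed.

Lemma cle_cR_commute (a : F -> Prop) (x y z : F) :
  upset (cle F) a -> cle F x y -> cR F a y z -> exists w, cR F a x w /\ cle F w z.
Proof. destruct HF as [_ [_ [_ H]]]; intros Ha; apply H, Ha. Qed.

Lemma sat_upset (V : valuation F) (f : form) :
  valid_val F V -> upset (cle F) (fun x => sat F V x f).
Proof.
  intro HV; induction f as [n| |a IHa b IHb|a IHa b IHb|a IHa b IHb|a IHa b IHb];
    intros x y Hxy; simpl.
  - apply HV, Hxy.
  - tauto.
  - intros [Ha Hb]; split; [apply (IHa x) | apply (IHb x)]; assumption.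
  - intros [Ha|Hb]; [left; apply (IHa x) | right; apply (IHb x)]; assumption.
  - intros H z Hyz; apply H, (cle_trans _ _ _ Hxy Hyz).
  - intros H z Hyz.
    destruct (cle_cR_commute _ _ _ _ IHa Hxy Hyz) as [w [Hxw Hwz]].
    apply (IHb w), H, Hxw; exact Hwz.
Qed.

Lemma frame_valid_subst (s : nat -> form) (f : form) :
  frame_valid F f -> frame_valid F (subst s f).
Proof.
  intros Hf V HV x; apply sat_subst, Hf.
  intro n; apply sat_upset, HV.
Qed.

Lemma frame_valid_iff_ext (a b : form) (V : valuation F) :
  frame_valid F (Iff a b) -> valid_val F V ->
  (fun x => sat F V x a) = (fun x => sat F V x b).
Proof.
  intros Hab HV; apply pred_ext; intro x.
  destruct (Hab V HV x) as [Hl Hr].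
  split; [apply Hl | apply Hr]; apply cle_refl.
Qed.

Theorem ICK_sound (Gamma : form -> Prop) :
  (forall g, Gamma g -> frame_valid F g) ->
  forall f, ICK Gamma f -> frame_valid F f.
Proof.
  intros HGamma f Hf.
  induction Hf as [| | | | | | | | |g Hg| | |s a _ IH|a b _ IHab _ IHa
                  |a b c _ IH|a b c _ IH].
  all: try (intros V HV x; simpl).
  all: pose proof (fun f => sat_upset V f HV) as up.
  - intros y _ Ha z Hyz _; exact (up a y z Hyz Ha).
  - intros y _ Habc z Hyz Hab w Hzw Ha.
    apply (Habc w (cle_trans _ _ _ Hyz Hzw) Ha w (cle_refl w)), Hab; assumption.
  - intros y _ Ha z Hyz Hb; split; [exact (up a y z Hyz Ha) | exact Hb].
  - intros y _ [Ha _]; exact Ha.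
  - intros y _ [_ Hb]; exact Hb.
  - intros y _ Ha; left; exact Ha.
  - intros y _ Hb; right; exact Hb.
  - intros y _ Hac z Hyz Hbc w Hzw [Ha|Hb].
    + apply (Hac w (cle_trans _ _ _ Hyz Hzw) Ha).
    + apply (Hbc w Hzw Hb).
  - intros y _ [].
  - apply (HGamma g Hg V HV).
  - split.
    + intros y _ H; split; intros z Hz; apply (H z Hz).
    + intros y _ [Hq Hr] z Hz; split; [apply Hq | apply Hr]; exact Hz.
  - split; [intros y _ _ z _ [] | intros y _ _ z _ w _ []].
  - apply (frame_valid_subst s a IH V HV x).
  - exact (IHab V HV x x (cle_refl x) (IHa V HV x)).
  - rewrite (frame_valid_iff_ext _ _ _ IH HV).
    split; intros y _ H; exact H.
  - split; intros y _ H z Hz; destruct (IH V HV z) as [Hab Hba].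
    + apply (Hab z (cle_refl z)), H, Hz.
    + apply (Hba z (cle_refl z)), H, Hz.
Qed.

End FrameSemantics.

Lemma reflexive_cond_valid_ImpCond (F : cframe) :
  reflexive_cond F -> frame_valid F ax_ImpCond.
Proof.
  intros HR V HV x; simpl; intros y _ Himp z Hyz.
  destruct (HR _ (HV 0) y z Hyz) as [Hle Hp].
  apply Himp; assumption.
Qed.

Section Derivations.
Variable Gamma : form -> Prop.

Inductive derives (Hyp : form -> Prop) : form -> Prop :=
  | der_thm a : ICK Gamma a -> derives Hyp a
  | der_hyp a : Hyp a -> derives Hyp a
  | der_mp a b : derives Hyp (Imp a b) -> derives Hyp a -> derives Hyp b.

Lemma derives_mono (Hyp Hyp' : form -> Prop) (a : form) :
  (forall b, Hyp b -> Hyp' b) -> derives Hyp a -> derives Hyp' a.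
Proof.
  intros Hsub D; induction D as [a Ha|a Ha|a b _ IHab _ IHa].
  - apply der_thm, Ha.
  - apply der_hyp, Hsub, Ha.
  - exact (der_mp _ _ _ IHab IHa).
Qed.

Lemma ICK_imp_refl (a : form) : ICK Gamma (Imp a a).
Proof.
  apply (r_MP _ _ _ (r_MP _ _ _ (ax_S _ a (Imp a a) a) (ax_K _ a (Imp a a)))).
  apply ax_K.
Qed.

Lemma derives_deduction (Hyp : form -> Prop) (a b : form) :
  derives (fun c => Hyp c \/ c = a) b -> derives Hyp (Imp a b).
Proof.
  intro D; induction D as [b Hb|b [Hb|Hb]|b c _ IHbc _ IHb].
  - exact (der_mp _ _ _ (der_thm _ _ (ax_K _ b a)) (der_thm _ _ Hb)).
  - exact (der_mp _ _ _ (der_thm _ _ (ax_K _ b a)) (der_hyp _ _ Hb)).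
  - subst b; apply der_thm, ICK_imp_refl.
  - exact (der_mp _ _ _ (der_mp _ _ _ (der_thm _ _ (ax_S _ a b c)) IHbc) IHb).
Qed.

Lemma ICK_of_derives (a : form) : derives (fun _ => False) a -> ICK Gamma a.
Proof.
  intro D; induction D as [a Ha|a []|a b _ IHab _ IHa].
  - exact Ha.
  - exact (r_MP _ _ _ IHab IHa).
Qed.

Lemma ICK_imp_of_derives (a b : form) : derives (fun c => c = a) b -> ICK Gamma (Imp a b).
Proof.
  intro D; apply ICK_of_derives, derives_deduction.
  revert D; apply derives_mono; intros c Hc; right; exact Hc.
Qed.

Lemma ICK_imp_trans (a b c : form) :
  ICK Gamma (Imp a b) -> ICK Gamma (Imp b c) -> ICK Gamma (Imp a c).
Proof.
  intros Hab Hbc; apply ICK_imp_of_derives.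
  apply (der_mp _ _ _ (der_thm _ _ Hbc)), (der_mp _ _ _ (der_thm _ _ Hab)).
  apply der_hyp; reflexivity.
Qed.

Lemma ICK_iff_intro (a b : form) :
  ICK Gamma (Imp a b) -> ICK Gamma (Imp b a) -> ICK Gamma (Iff a b).
Proof. intros Hab Hba; exact (r_MP _ _ _ (r_MP _ _ _ (ax_andI _ _ _) Hab) Hba). Qed.

Lemma ICK_iff_imp_l (a b : form) : ICK Gamma (Iff a b) -> ICK Gamma (Imp a b).
Proof. apply r_MP, ax_andE1. Qed.

Lemma ICK_iff_imp_r (a b : form) : ICK Gamma (Iff a b) -> ICK Gamma (Imp b a).
Proof. apply r_MP, ax_andE2. Qed.

Lemma ICK_cond_and (p q r : form) :
  ICK Gamma (Iff (Cond p (And q r)) (And (Cond p q) (Cond p r))).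
Proof.
  set (s n := match n with 0 => p | 1 => q | 2 => r | _ => Var n end).
  exact (r_subst _ s _ (ax_CondAnd _)).
Qed.

Lemma ICK_cond_mono (p c d : form) :
  ICK Gamma (Imp c d) -> ICK Gamma (Imp (Cond p c) (Cond p d)).
Proof.
  intro Hcd.
  assert (Hc_cd : ICK Gamma (Iff c (And c d))).
  { apply ICK_iff_intro; [apply ICK_imp_of_derives | apply ax_andE1].
    assert (Hc : derives (fun x => x = c) c) by (apply der_hyp; reflexivity).
    exact (der_mp _ _ _ (der_mp _ _ _ (der_thm _ _ (ax_andI _ _ _)) Hc)
             (der_mp _ _ _ (der_thm _ _ Hcd) Hc)). }
  apply (ICK_imp_trans _ _ _ (ICK_iff_imp_l _ _ (r_congR _ _ _ p Hc_cd))).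
  apply (ICK_imp_trans _ _ _ (ICK_iff_imp_l _ _ (ICK_cond_and _ _ _))), ax_andE2.
Qed.

End Derivations.

Fixpoint form_code (f : form) : nat :=
  match f with
  | Var n => to_nat (0, n)
  | Bot => to_nat (1, 0)
  | And a b => to_nat (2, to_nat (form_code a, form_code b))
  | Or a b => to_nat (3, to_nat (form_code a, form_code b))
  | Imp a b => to_nat (4, to_nat (form_code a, form_code b))
  | Cond a b => to_nat (5, to_nat (form_code a, form_code b))
  end.

Lemma to_nat_inj (p q : nat * nat) : to_nat p = to_nat q -> p = q.
Proof. intro E; rewrite <- (cancel_of_to p), <- (cancel_of_to q), E; reflexivity. Qed.

Lemma form_code_inj (f g : form) : form_code f = form_code g -> f = g.
Proof.
  revert g; induction f; destruct g; cbn [form_code]; intro E;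
    repeat match goal with H : to_nat _ = to_nat _ |- _ =>
                             apply to_nat_inj, pair_equal_spec in H; destruct H end;
    try discriminate; f_equal; auto.
Qed.

Section PrimeTheories.
Variable Gamma : form -> Prop.

Record prime_theory (T : form -> Prop) : Prop := {
  prime_theory_closed : forall a, derives Gamma T a -> T a;
  prime_theory_prime : forall a b, T (Or a b) -> T a \/ T b;
  prime_theory_consistent : ~ T Bot }.

Section Lindenbaum.
Variables (Hyp : form -> Prop) (psi : form).
Hypothesis Hyp_psi : ~ derives Gamma Hyp psi.

Fixpoint stage (n : nat) : form -> Prop :=
  match n with
  | 0 => Hyp
  | S n => fun f => stage n f \/
             (form_code f = n /\ ~ derives Gamma (fun c => stage n c \/ c = f) psi)
  end.

Lemma stage_mono (n m : nat) (f : form) : n <= m -> stage n f -> stage m f.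
Proof. intro Hnm; induction Hnm; simpl; auto. Qed.

Lemma stage_avoids (n : nat) : ~ derives Gamma (stage n) psi.
Proof.
  induction n as [|n IH]; simpl; [exact Hyp_psi|].
  destruct (classic (exists f, form_code f = n /\
                        ~ derives Gamma (fun c => stage n c \/ c = f) psi))
    as [[f [Hf Hnot]]|Hnone]; intro D.
  - apply Hnot; revert D; apply derives_mono; intros c [Hc|[Hc _]]; [left; exact Hc|].
    right; apply form_code_inj; congruence.
  - apply IH; revert D; apply derives_mono; intros c [Hc|Hc]; [exact Hc|].
    exfalso; apply Hnone; exists c; exact Hc.
Qed.

Definition limit (f : form) : Prop := exists n, stage n f.

Lemma limit_derives_finite (a : form) :
  derives Gamma limit a -> exists n, derives Gamma (stage n) a.
Proof.
  intro D; induction D as [a Ha|a [n Hn]|a b _ [n1 IH1] _ [n2 IH2]].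
  - exists 0; apply der_thm, Ha.
  - exists n; apply der_hyp, Hn.
  - exists (n1 + n2); apply (der_mp _ _ a);
      [revert IH1 | revert IH2]; apply derives_mono; intro c; apply stage_mono; lia.
Qed.

Lemma limit_avoids : ~ derives Gamma limit psi.
Proof. intro D; destruct (limit_derives_finite _ D) as [n Dn]; exact (stage_avoids n Dn). Qed.

Lemma limit_maximal (a : form) :
  ~ derives Gamma (fun c => limit c \/ c = a) psi -> limit a.
Proof.
  intro Hnot; exists (S (form_code a)); simpl; right; split; [reflexivity|].
  intro D; apply Hnot; revert D; apply derives_mono.
  intros c [Hc|Hc]; [left; exists (form_code a); exact Hc | right; exact Hc].
Qed.

Lemma limit_closed (a : form) : derives Gamma limit a -> limit a.
Proof.
  intro Da; apply limit_maximal; intro D.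
  exact (limit_avoids (der_mp _ _ _ _ (derives_deduction _ _ _ _ D) Da)).
Qed.

Lemma limit_prime (a b : form) : limit (Or a b) -> limit a \/ limit b.
Proof.
  intro Hab; apply NNPP; intro Hnot.
  assert (Dimp : forall c, ~ limit c -> derives Gamma limit (Imp c psi)).
  { intros c Hc; apply derives_deduction, NNPP; intro D; exact (Hc (limit_maximal c D)). }
  apply limit_avoids.
  apply (der_mp _ _ (Or a b)); [|apply der_hyp, Hab].
  apply (der_mp _ _ (Imp b psi)); [|apply Dimp; tauto].
  apply (der_mp _ _ (Imp a psi)); [apply der_thm, ax_orE | apply Dimp; tauto].
Qed.

Theorem lindenbaum :
  exists T, prime_theory T /\ (forall a, Hyp a -> T a) /\ ~ T psi.
Proof.
  exists limit; split; [split|split].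
  - exact limit_closed.
  - exact limit_prime.
  - intro Hbot; apply limit_avoids.
    exact (der_mp _ _ _ _ (der_thm _ _ _ (ax_botE _ psi)) (der_hyp _ _ _ Hbot)).
  - intros a Ha; exists 0; exact Ha.
  - intro Hpsi; exact (limit_avoids (der_hyp _ _ _ Hpsi)).
Qed.

End Lindenbaum.
End PrimeTheories.

Section CanonicalModel.
Variable Gamma : form -> Prop.
Hypothesis Gamma_ImpCond : Gamma ax_ImpCond.

Record world := { theory :> form -> Prop; theory_prime : prime_theory Gamma theory }.

Definition world_le (x y : world) : Prop := forall a, x a -> y a.

Definition world_R (A : world -> Prop) (x y : world) : Prop :=
  exists phi, (forall z : world, A z <-> z phi) /\ world_le x y /\ y phi /\
    (forall chi, x (Cond phi chi) -> y chi).

Definition canonical_frame : cframe :=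
  {| cw := world; cle := world_le; cR := world_R |}.

Definition canonical_val : valuation canonical_frame := fun n w => w (Var n).

Lemma world_derives (w : world) (a : form) : derives Gamma w a -> w a.
Proof. apply prime_theory_closed, theory_prime. Qed.

Lemma world_ICK (w : world) (a : form) : ICK Gamma a -> w a.
Proof. intro Ha; apply world_derives, der_thm, Ha. Qed.

Lemma world_mp (w : world) (a b : form) : w (Imp a b) -> w a -> w b.
Proof.
  intros Hab Ha; apply world_derives.
  exact (der_mp _ _ _ _ (der_hyp _ _ _ Hab) (der_hyp _ _ _ Ha)).
Qed.

Lemma world_and (w : world) (a b : form) : w (And a b) <-> w a /\ w b.
Proof.
  split.
  - intro Hab; split; [apply (world_mp _ _ _ (world_ICK _ _ (ax_andE1 _ a b))) |
                       apply (world_mp _ _ _ (world_ICK _ _ (ax_andE2 _ a b)))]; exact Hab.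
  - intros [Ha Hb].
    exact (world_mp _ _ _ (world_mp _ _ _ (world_ICK _ _ (ax_andI _ _ _)) Ha) Hb).
Qed.

Lemma world_or (w : world) (a b : form) : w (Or a b) <-> w a \/ w b.
Proof.
  split; [apply (prime_theory_prime Gamma), theory_prime|].
  intros [Ha|Hb]; [apply (world_mp _ _ _ (world_ICK _ _ (ax_orI1 _ a b))) |
                   apply (world_mp _ _ _ (world_ICK _ _ (ax_orI2 _ a b)))]; assumption.
Qed.

Lemma world_extend (Hyp : form -> Prop) (psi : form) :
  ~ derives Gamma Hyp psi -> exists w : world, (forall a, Hyp a -> w a) /\ ~ w psi.
Proof.
  intro H; destruct (lindenbaum Gamma Hyp psi H) as [T [HT [Hsub Hpsi]]].
  exists {| theory := T; theory_prime := HT |}; split; assumption.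
Qed.

Lemma ICK_imp_of_worlds (a b : form) :
  (forall w : world, w a -> w b) -> ICK Gamma (Imp a b).
Proof.
  intro Hab; apply NNPP; intro Hnot.
  destruct (world_extend (fun c => c = a) b) as [w [Ha Hb]].
  - intro D; exact (Hnot (ICK_imp_of_derives _ _ _ D)).
  - exact (Hb (Hab w (Ha a eq_refl))).
Qed.

Lemma ICK_ImpCond (p q : form) : ICK Gamma (Imp (Imp p q) (Cond p q)).
Proof.
  set (s n := match n with 0 => p | 1 => q | _ => Var n end).
  exact (r_subst _ s _ (ax_Gamma _ _ Gamma_ImpCond)).
Qed.

Lemma world_cond_closed (w : world) (phi chi : form) :
  derives Gamma (fun c => w c \/ c = phi \/ w (Cond phi c)) chi -> w (Cond phi chi).
Proof.
  intro D; induction D as [a Ha|a [Ha|[Ha|Ha]]|a b _ IHab _ IHa].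
  - apply world_ICK, (r_MP _ _ _ (ICK_ImpCond _ _)), (r_MP _ _ _ (ax_K _ _ _) Ha).
  - apply (world_mp _ _ _ (world_ICK _ _ (ICK_ImpCond _ _))).
    exact (world_mp _ _ _ (world_ICK _ _ (ax_K _ _ _)) Ha).
  - subst a; apply world_ICK, (r_MP _ _ _ (ICK_ImpCond _ _)), ICK_imp_refl.
  - exact Ha.
  - assert (Hand : w (Cond phi (And (Imp a b) a))).
    { apply (world_mp _ _ _ (world_ICK _ _ (ICK_iff_imp_r _ _ _ (ICK_cond_and _ _ _ _)))).
      exact (world_mp _ _ _ (world_mp _ _ _ (world_ICK _ _ (ax_andI _ _ _)) IHab) IHa). }
    assert (Hmp : ICK Gamma (Imp (And (Imp a b) a) b)).
    { apply ICK_imp_of_derives.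
      assert (Hyp : derives Gamma (fun c => c = And (Imp a b) a) (And (Imp a b) a))
        by (apply der_hyp; reflexivity).
      exact (der_mp _ _ _ _ (der_mp _ _ _ _ (der_thm _ _ _ (ax_andE1 _ _ _)) Hyp)
               (der_mp _ _ _ _ (der_thm _ _ _ (ax_andE2 _ _ _)) Hyp)). }
    exact (world_mp _ _ _ (world_ICK _ _ (ICK_cond_mono _ phi _ _ Hmp)) Hand).
Qed.

Lemma world_imp (w : world) (a b : form) :
  w (Imp a b) <-> forall w' : world, world_le w w' -> w' a -> w' b.
Proof.
  split.
  - intros Hab w' Hww' Ha; exact (world_mp _ _ _ (Hww' _ Hab) Ha).
  - intro H; apply NNPP; intro Hnot.
    destruct (world_extend (fun c => w c \/ c = a) b) as [w' [Hw' Hb]].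
    + intro D; exact (Hnot (world_derives _ _ (derives_deduction _ _ _ _ D))).
    + apply Hb, H; [intros c Hc | ]; apply Hw'; [left | right]; auto.
Qed.

Lemma world_cond (w : world) (a b : form) :
  w (Cond a b) <->
  forall w' : world, world_le w w' -> w' a -> (forall c, w (Cond a c) -> w' c) -> w' b.
Proof.
  split.
  - intros Hab w' _ _ Hcond; exact (Hcond b Hab).
  - intro H; apply NNPP; intro Hnot.
    destruct (world_extend (fun c => w c \/ c = a \/ w (Cond a c)) b) as [w' [Hw' Hb]].
    + intro D; exact (Hnot (world_cond_closed _ _ _ D)).
    + apply Hb, H; [intros c Hc | | intros c Hc]; apply Hw'; auto.
Qed.

Lemma world_R_formula (a : form) (x y : world) :
  world_R (fun z : world => z a) x y <->
  world_le x y /\ y a /\ (forall c, x (Cond a c) -> y c).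
Proof.
  split.
  - intros [phi [Hext [Hxy [Hphi Hcond]]]].
    assert (Heq : ICK Gamma (Iff phi a))
      by (apply ICK_iff_intro; apply ICK_imp_of_worlds; intro z; apply Hext).
    split; [exact Hxy | split; [apply Hext, Hphi |]].
    intros c Hc; apply Hcond.
    exact (world_mp _ _ _ (world_ICK _ _ (ICK_iff_imp_r _ _ _ (r_congL _ _ _ c Heq))) Hc).
  - intros [Hxy [Ha Hcond]]; exists a; split; [intro z; reflexivity | tauto].
Qed.

Lemma canonical_truth (f : form) (w : world) :
  sat canonical_frame canonical_val w f <-> w f.
Proof.
  revert w; induction f as [n| |a IHa b IHb|a IHa b IHb|a IHa b IHb|a IHa b IHb];
    intro w; simpl.
  - reflexivity.
  - split; [tauto | apply (prime_theory_consistent Gamma), theory_prime].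
  - rewrite world_and, IHa, IHb; reflexivity.
  - rewrite world_or, IHa, IHb; reflexivity.
  - rewrite world_imp; setoid_rewrite IHa; setoid_rewrite IHb; reflexivity.
  - rewrite (pred_ext _ (fun z : world => z a) IHa), world_cond.
    setoid_rewrite world_R_formula; setoid_rewrite IHb; firstorder.
Qed.

Lemma canonical_frame_is_cframe (w : world) : is_cframe canonical_frame.
Proof.
  split; [exact (inhabits w) | split; [|split]].
  - intros x a Ha; exact Ha.
  - intros x y z Hxy Hyz a Ha; apply Hyz, Hxy, Ha.
  - intros A _ x y z Hxy [phi [Hext [Hyz [Hphi Hcond]]]].
    exists z; split; [| intros a Ha; exact Ha].
    exists phi; split; [exact Hext | split; [| split; [exact Hphi |]]].
    + intros a Ha; apply Hyz, Hxy, Ha.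
    + intros chi Hchi; apply Hcond, Hxy, Hchi.
Qed.

Lemma canonical_frame_reflexive : reflexive_cond canonical_frame.
Proof. intros A _ x y [phi [Hext [Hxy [Hphi _]]]]; split; [exact Hxy | apply Hext, Hphi]. Qed.

Lemma canonical_val_valid : valid_val canonical_frame canonical_val.
Proof. intros n x y Hxy; apply Hxy. Qed.

Theorem ICK_complete_reflexive (f : form) :
  (forall F : cframe, is_cframe F -> reflexive_cond F -> frame_valid F f) -> ICK Gamma f.
Proof.
  intro Hvalid; apply NNPP; intro Hnot.
  destruct (world_extend (fun _ => False) f) as [w [_ Hw]].
  - intro D; exact (Hnot (ICK_of_derives _ _ D)).
  - apply Hw, canonical_truth.
    apply Hvalid; [apply (canonical_frame_is_cframe w) | exact canonical_frame_reflexive |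
                   exact canonical_val_valid].
Qed.

End CanonicalModel.

Theorem proposition5p6 :
  forall f : form,
    ICK (fun g => g = ax_ImpCond) f <->
    (forall F : cframe, is_cframe F -> reflexive_cond F -> frame_valid F f).
Proof.
  intro f; split.
  - intros Hf F HF HR; revert f Hf; apply (ICK_sound F HF).
    intros g ->; apply reflexive_cond_valid_ImpCond, HR.
  - apply ICK_complete_reflexive; reflexivity.
Qed.
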